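(* Every (one-sided) infinite word that contains no $3$-antipower as a factor contains at most two distinct letters.
   Context: A $3$-antipower is a finite word $u_1u_2u_3$ with $|u_1|=|u_2|=|u_3|$ and $u_1,u_2,u_3$ pairwise distinct; a factor is a contiguous subword. *)

From mathcomp Require Import all_boot.
Set Implicit Arguments. Unset Strict Implicit. Unset Printing Implicit Defensive.

Definition antipower3 {A : eqType} (s : seq A) : Prop :=
  exists m : nat,
    size s = 3 * m /\
    let u1 := take m s in
    let u2 := take m (drop m s) in
    let u3 := drop (2 * m) s in
    [/\ u1 != u2, u1 != u3 & u2 != u3].

Definition factor_of {A : Type} (w : nat -> A) (s : seq A) : Prop :=
  exists i n : nat, s = mkseq (fun k => w (i + k)) n.

(* If the word has three letters, let z be the first occurrence of a third
   letter, y^k the maximal run of equal letters just before it, and x the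
   letter preceding that run: x y^k z is a factor with x, y, z pairwise
   distinct.  For k <> 2 pick m with 2m <= k + 1 < 3m and cut three blocks of
   length m starting at x.  The first two blocks begin with x and y, and at
   offset k + 1 - 2m the third block reads z while the first two read x or y,
   so the blocks are pairwise distinct.  For k = 2 a case analysis on the next
   three letters always finds a 3-antipower with blocks of length 1, 2 or 3. *)

From mathcomp Require Import all_boot zify.
From Stdlib Require Import Classical.

Set Implicit Arguments.
Unset Strict Implicit.
Unset Printing Implicit Defensive.

Definition antipower3_free (A : eqType) (w : nat -> A) : Prop :=
  forall s : seq A, factor_of w s -> ~ antipower3 s.

Lemma antipower3_nth (A : eqType) (x0 : A) (s : seq A) m j1 j2 j3 :
  size s = 3 * m -> j1 < m -> j2 < m -> j3 < m ->
  nth x0 s j1 != nth x0 s (m + j1) ->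
  nth x0 s j2 != nth x0 s (2 * m + j2) ->
  nth x0 s (m + j3) != nth x0 s (2 * m + j3) -> antipower3 s.
Proof.
move=> size_s j1m j2m j3m d12 d13 d23; exists m; split=> //.
have neq_nth t u j : nth x0 t j != nth x0 u j -> t != u.
  by apply: contraNneq => ->.
split.
- by apply: (neq_nth _ _ j1); rewrite !nth_take // nth_drop.
- by apply: (neq_nth _ _ j2); rewrite nth_take // nth_drop.
- by apply: (neq_nth _ _ j3); rewrite nth_take // !nth_drop.
Qed.

Lemma factor_of_shift (A : Type) (w : nat -> A) p s :
  factor_of (fun n => w (p + n)) s -> factor_of w s.
Proof.
move=> [i [n ->]]; exists (p + i), n.
by apply: eq_mkseq => k; rewrite addnA.
Qed.

Lemma antipower3_free_shift (A : eqType) (w : nat -> A) p :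
  antipower3_free w -> antipower3_free (fun n => w (p + n)).
Proof. by move=> free_w s /factor_of_shift; apply: free_w. Qed.

Lemma last_change (A : eqType) (w : nat -> A) s t :
  s <= t -> w s != w t ->
  exists r, [/\ s <= r < t, w r != w t & forall i, r < i <= t -> w i = w t].
Proof.
move=> st ws_t.
have st' : s < t by rewrite ltn_neqAle st andbT; apply: contraNneq ws_t => ->.
pose P r := [&& s <= r, r < t & w r != w t].
have P_s : P s by rewrite /P leqnn st' ws_t.
have P_lt r : P r -> r <= t by case/and3P=> _ /ltnW.
have [r /and3P[sr rt wr_t] r_max] := ex_maxnP (ex_intro P s P_s) P_lt.
exists r; split; rewrite ?sr //.
move=> i /andP[ri it]; have si := leq_trans sr (ltnW ri).
apply/eqP; apply: contraLR ri => wi_t.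
have i_lt_t : i < t by rewrite ltn_neqAle it andbT; apply: contraNneq wi_t => ->.
rewrite -leqNgt; apply: r_max.
by rewrite /P si i_lt_t wi_t.
Qed.

Definition three_letter_run (A : eqType) (w : nat -> A) (k : nat) : Prop :=
  [/\ 0 < k, w 0 != w 1, w 0 != w k.+1, w 1 != w k.+1
    & forall i, 0 < i <= k -> w i = w 1].

Section Antipower3Free.

Variables (A : eqType) (w : nat -> A).
Hypothesis free_w : antipower3_free w.

Lemma antipower3_free_mismatch i m j1 j2 j3 :
  j1 < m -> j2 < m -> j3 < m ->
  w (i + j1) != w (i + (m + j1)) ->
  w (i + j2) != w (i + (2 * m + j2)) ->
  w (i + (m + j3)) != w (i + (2 * m + j3)) -> False.
Proof.
move=> j1m j2m j3m d12 d13 d23.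
apply: (free_w (s := mkseq (fun k => w (i + k)) (3 * m))).
  by exists i, (3 * m).
apply: (antipower3_nth (x0 := w i) (size_mkseq _ _) j1m j2m j3m);
  by rewrite !nth_mkseq //; lia.
Qed.

Lemma consecutive_letters i :
  w i != w i.+1 -> w i.+2 = w i \/ w i.+2 = w i.+1.
Proof.
move=> d01.
have [|d02] := eqVneq (w i.+2) (w i); first by left.
have [|d12] := eqVneq (w i.+2) (w i.+1); first by right.
exfalso; apply: (antipower3_free_mismatch (i := i) (m := 1)
                   (j1 := 0) (j2 := 0) (j3 := 0));
  by rewrite // !addn0 ?addn1 ?muln1 ?addn2 // eq_sym.
Qed.

Lemma no_three_letter_run_of_two :
  w 0 != w 1 -> w 0 != w 3 -> w 1 != w 3 -> w 2 = w 1 -> False.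
Proof.
move=> xy xz yz y2.
have y4 : w 4 = w 1.
  have [-> //|z4] : w 4 = w 2 \/ w 4 = w 3 by apply: consecutive_letters; rewrite y2.
  exfalso; apply: (antipower3_free_mismatch (i := 0) (m := 2)
                   (j1 := 0) (j2 := 0) (j3 := 0));
    by rewrite // ?y2 ?z4.
have z5 : w 5 = w 3.
  have [//|z5] := eqVneq (w 5) (w 3).
  exfalso; apply: (antipower3_free_mismatch (i := 0) (m := 2)
                   (j1 := 0) (j2 := 0) (j3 := 1));
    by rewrite // ?y2 ?y4 // eq_sym.
have [y6|z6] : w 6 = w 4 \/ w 6 = w 5 by apply: consecutive_letters; rewrite y4 z5.
- apply: (antipower3_free_mismatch (i := 0) (m := 3)
          (j1 := 0) (j2 := 0) (j3 := 0));
    by rewrite // ?y6 ?y4 // eq_sym.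
- apply: (antipower3_free_mismatch (i := 1) (m := 2)
          (j1 := 0) (j2 := 0) (j3 := 1));
    by rewrite // ?z6 ?z5 ?y4 ?y2.
Qed.

Lemma no_three_letter_run k : ~ three_letter_run w k.
Proof.
case=> k_gt0 xy xz yz run.
have [k2|k_neq2] := eqVneq k 2.
  by subst k; apply: no_three_letter_run_of_two => //; apply: run.
pose m := k.+1 %/ 2.
have m_range : 0 < m <= k by rewrite /m; lia.
have /andP[le2m lt3m] : 2 * m <= k.+1 < 3 * m by rewrite /m; lia.
have w_offset_neq_z : w (k.+1 - 2 * m) != w k.+1.
  have [->|j_gt0] := posnP (k.+1 - 2 * m); first by [].
  by rewrite run //; lia.
apply: (antipower3_free_mismatch (i := 0) (m := m) (j1 := 0)
          (j2 := k.+1 - 2 * m) (j3 := k.+1 - 2 * m)); rewrite ?add0n ?addn0; try lia.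
- by rewrite (run m).
- by rewrite subnKC.
- by rewrite subnKC // run //; lia.
Qed.

End Antipower3Free.

Section ThirdLetter.

Variables (A : eqType) (w : nat -> A).

Lemma exists_third_letter :
  ~ (exists a b : A, forall n, w n = a \/ w n = b) ->
  forall a b, exists n, (w n != a) && (w n != b).
Proof.
move=> not_two a b; apply: NNPP => no_n; apply: not_two; exists a, b => n.
have [|wn_a] := eqVneq (w n) a; first by left.
have [|wn_b] := eqVneq (w n) b; first by right.
by case: no_n; exists n; rewrite wn_a wn_b.
Qed.

Lemma first_third_letter :
  (forall a b, exists n, (w n != a) && (w n != b)) ->
  exists l s, [/\ s < l, w s != w l.-1 & forall i, i < l -> w i != w l].
Proof.
move=> third.
have [j /andP[wj0 _] j_min] := ex_minnP (third (w 0) (w 0)).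
have before_j i : i < j -> w i = w 0.
  by move=> ij; apply/eqP; apply: contraTT ij => wi0; rewrite -leqNgt j_min ?wi0.
have [l /andP[wl0 wlj] l_min] := ex_minnP (third (w 0) (w j)).
have before_l i : i < l -> (w i == w 0) || (w i == w j).
  by move=> il; apply: contraTT il => /norP[wi0 wij]; rewrite -leqNgt l_min ?wi0.
have l_new i : i < l -> w i != w l.
  by move/before_l => /orP[] /eqP ->; rewrite eq_sym.
have jl : j < l.
  rewrite ltnNge leq_eqVlt; apply/negP => /orP[/eqP lj | /before_j wl0'].
  - by rewrite lj eqxx in wlj.
  - by rewrite wl0' eqxx in wl0.
have [wt0|wt0] := eqVneq (w l.-1) (w 0).
- by exists l, j; rewrite wt0.
- by exists l, 0; rewrite eq_sym (leq_ltn_trans _ jl).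
Qed.

Lemma three_letter_run_exists :
  ~ (exists a b : A, forall n, w n = a \/ w n = b) ->
  exists p k, three_letter_run (fun n => w (p + n)) k.
Proof.
move=> /exists_third_letter /first_third_letter [l [s [sl ws_t l_new]]].
have st : s <= l.-1 by lia.
have [r [/andP[sr rt] wr_t run]] := last_change st ws_t.
have r_end : r + (l.-1 - r).+1 = l by lia.
have wr1 : w (r + 1) = w l.-1 by rewrite run //; lia.
exists r, (l.-1 - r); split => /=.
- by rewrite subn_gt0.
- by rewrite addn0 wr1.
- by rewrite addn0 r_end l_new //; lia.
- by rewrite wr1 r_end l_new //; lia.
- by move=> i /andP[i0 ik]; rewrite wr1 run //; lia.
Qed.

End ThirdLetter.

Theorem corollary10 (A : eqType) (w : nat -> A) :
  (forall s : seq A, factor_of w s -> ~ antipower3 s) ->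
  exists a b : A, forall n : nat, w n = a \/ w n = b.
Proof.
move=> free_w; apply: NNPP => /three_letter_run_exists [p [k run]].
exact: (no_three_letter_run (antipower3_free_shift free_w) run).
Qed.
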